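(* Let $J$ be a $\times d$-invariant set satisfying conditions (i) and (ii) below, let $\delta$ be its Hausdorff dimension and $\mu=\mathcal{H}^\delta|_J/\mathcal{H}^\delta(J)$. Then for $\mu$-almost every $x\in J$, every rational number in $J_x=\{t-x:t\in J\}$ is of the form $p/d^n$ with $p\in\mathbb{Z}$ and $n\in\mathbb{N}\cup\{0\}$. Conditions: (i) $d$ is prime; (ii) $E$ contains both $0$ and $d-1$, and $E$ contains no two integers differing by $1$.
   Context: Fix an integer $d\ge2$ and $E\subseteq\{0,\dots,d-1\}$ with $1<\#E<d$. The $\times d$-invariant set is $J=\{x\in[0,1]: x=\sum_{i\ge1}a_id^{-i}\text{ with all }a_i\in E\}$. Under $\mu$ the base-$d$ digits of a random point are i.i.d. uniform on $E$. *)

From Stdlib Require Import Reals Lra Lia ZArith Arith List Znumtheory.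
Import ListNotations.
Open Scope R_scope.

(* x = sum_{i>=1} a_i d^{-i}, digits indexed from 0: a i is the (i+1)-th digit. *)
Definition digit_val (d : nat) (a : nat -> nat) (x : R) : Prop :=
  Un_cv (fun n => sum_f_R0 (fun i => INR (a i) / INR d ^ (S i)) n) x.

Definition digits_in (E : list nat) (a : nat -> nat) : Prop :=
  forall i, In (a i) E.

Definition inJ (d : nat) (E : list nat) (x : R) : Prop :=
  exists a, digits_in E a /\ digit_val d a x.

Definition is_rational (r : R) : Prop :=
  exists p q : Z, q <> 0%Z /\ r = IZR p / IZR q.

Definition has_prefix (w : list nat) (a : nat -> nat) : Prop :=
  forall i, (i < length w)%nat -> nth i w 0%nat = a i.

(* A set B of digit sequences is null for the product measure under which the
   digits are i.i.d. uniform on E: for every eps > 0 it can be covered by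
   countably many cylinders [w] (each of mass (#E)^(-|w|)) of total mass <= eps. *)
Definition digit_null (E : list nat) (B : (nat -> nat) -> Prop) : Prop :=
  forall eps, eps > 0 ->
    exists W : nat -> list nat,
      (forall n, sum_f_R0 (fun k => / INR (length E) ^ length (W k)) n <= eps) /\
      (forall a, digits_in E a -> B a -> exists k, has_prefix (W k) a).

(* mu-almost every x in J satisfies P, where mu is the law of a point of J whose
   base-d digits are i.i.d. uniform on E. *)
Definition mu_ae (d : nat) (E : list nat) (P : R -> Prop) : Prop :=
  digit_null E (fun a => exists x, digit_val d a x /\ ~ P x).

(* Let a, b be digit sequences over E of x and t, with t - x = p/q (q > 0) not of the
   form p'/d^n.  The gap g_n = d^n (t - x) - K_n between the n-th tails of t and x lies
   in (-1, 1), is never 0, and q g_n is an integer, so |g_n| >= 1/q.  If d^L >= q, a run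
   of L digits d - 1 (resp. 0) in a starting at i + 1 forces g_{i+1} < 0 (resp. > 0),
   which determines the integer K_{i+1} = d K_i + b_i - a_i from d^{i+1} p/q alone.
   As d is prime and E misses a residue, some a_i in E leaves no b_i in E with that
   residue of b_i - a_i; so at every position one word of length L + 1 is forbidden
   to a.  Sequences avoiding a fixed word in each of K disjoint blocks have mass at
   most (1 - #E^-(L+1))^K, and a countable union over p/q finishes the proof. *)

From Stdlib Require Import Reals Lra Lia ZArith Arith List Znumtheory.
From Stdlib Require Import Classical ClassicalEpsilon Cantor.
Import ListNotations.
Open Scope R_scope.

Definition sum_list (l : list R) : R := fold_right Rplus 0 l.

Lemma sum_list_app l1 l2 : sum_list (l1 ++ l2) = sum_list l1 + sum_list l2.
Proof. induction l1 as [|x l1 IH]; simpl; [lra | rewrite IH; lra]. Qed.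

Lemma sum_list_concat {A} (f : A -> R) (L : list (list A)) :
  sum_list (map f (concat L)) = sum_list (map (fun l => sum_list (map f l)) L).
Proof. induction L as [|l L IH]; simpl; auto. rewrite map_app, sum_list_app, IH. reflexivity. Qed.

Lemma sum_list_nonneg {A} (f : A -> R) l :
  (forall x, In x l -> 0 <= f x) -> 0 <= sum_list (map f l).
Proof.
  induction l as [|x l IH]; simpl; intros Hf; [lra|].
  assert (0 <= f x) by auto. assert (0 <= sum_list (map f l)) by auto. lra.
Qed.

Lemma sum_f_R0_nth_le {A} (f : A -> R) (l : list A) dflt n :
  (forall x, In x l -> 0 <= f x) -> (n < length l)%nat ->
  sum_f_R0 (fun k => f (nth k l dflt)) n <= sum_list (map f l).
Proof.
  revert n; induction l as [|x l IH]; intros n Hf Hn; simpl in *; [lia|].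
  destruct n as [|n].
  - simpl. assert (0 <= sum_list (map f l)) by (apply sum_list_nonneg; auto). lra.
  - rewrite decomp_sum by lia. simpl.
    assert (sum_f_R0 (fun i => f (nth i l dflt)) n <= sum_list (map f l)) by (apply IH; auto; lia).
    lra.
Qed.

Lemma sum_list_halving (g : nat -> R) eps M :
  (forall N, g N <= eps / 2 ^ S N) -> sum_list (map g (seq 0 M)) <= eps - eps / 2 ^ M.
Proof.
  intros Hg. induction M as [|M IH]; [simpl; lra|].
  rewrite seq_S, map_app, sum_list_app. simpl. specialize (Hg M). simpl in Hg.
  assert (0 < 2 ^ M) by (apply pow_lt; lra).
  assert (eps / (2 * 2 ^ M) = eps / 2 ^ M / 2) by (field; lra). lra.
Qed.

Definition cyl_mass (e : nat) (w : list nat) : R := / INR e ^ length w.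

Lemma cyl_mass_nonneg e w : (1 <= e)%nat -> 0 <= cyl_mass e w.
Proof. intros. apply Rlt_le, Rinv_0_lt_compat, pow_lt, lt_0_INR. lia. Qed.

Definition covers (E : list nat) (C : list (list nat)) (B : (nat -> nat) -> Prop) : Prop :=
  forall a, digits_in E a -> B a -> exists w, In w C /\ has_prefix w a.

(* Covers are required to be non-empty so that their concatenation can be indexed
   without padding by the empty word, whose mass is 1. *)
Definition finitely_null (E : list nat) (B : (nat -> nat) -> Prop) : Prop :=
  forall eps, eps > 0 -> exists C, C <> [] /\
    sum_list (map (cyl_mass (length E)) C) <= eps /\ covers E C B.

Section CountableUnion.
Variable Cf : nat -> list (list nat).
Hypothesis Cf_nonempty : forall N, Cf N <> [].

Definition first_covers (M : nat) : list (list nat) := concat (map Cf (seq 0 M)).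

Lemma first_covers_length M : (M <= length (first_covers M))%nat.
Proof.
  induction M as [|M IH]; [simpl; lia|]. unfold first_covers in *.
  rewrite seq_S, map_app, concat_app, length_app. simpl. rewrite app_nil_r.
  destruct (Cf M) eqn:HM; [contradiction (Cf_nonempty M) | simpl; lia].
Qed.

Lemma first_covers_nth M M' k : (M <= M')%nat -> (k < length (first_covers M))%nat ->
  nth k (first_covers M) [] = nth k (first_covers M') [].
Proof.
  intros HM Hk. unfold first_covers in *. replace M' with (M + (M' - M))%nat by lia.
  rewrite seq_app, map_app, concat_app, app_nth1; auto.
Qed.

Lemma first_covers_nth_stable M k : (k < length (first_covers M))%nat ->
  nth k (first_covers M) [] = nth k (first_covers (S k)) [].
Proof.
  intros Hk. destruct (Nat.le_gt_cases M (S k)).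
  - apply first_covers_nth; auto.
  - symmetry. apply first_covers_nth; [lia|]. pose proof (first_covers_length (S k)). lia.
Qed.

End CountableUnion.

Lemma digit_null_of_countable_union (E : list nat) (B : (nat -> nat) -> Prop)
  (BN : nat -> (nat -> nat) -> Prop) :
  (1 <= length E)%nat ->
  (forall N, finitely_null E (BN N)) ->
  (forall a, digits_in E a -> B a -> exists N, BN N a) ->
  digit_null E B.
Proof.
  intros HE Hnull HB eps Heps.
  destruct (choice (fun N C => C <> [] /\
      sum_list (map (cyl_mass (length E)) C) <= eps / 2 ^ S N /\ covers E C (BN N)))
    as [Cf HCf].
  { intros N. apply Hnull. apply Rdiv_lt_0_compat; [lra | apply pow_lt; lra]. }
  assert (Hne : forall N, Cf N <> []) by (intros N; apply HCf).
  exists (fun k => nth k (first_covers Cf (S k)) []). split.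
  - intros n.
    pose proof (first_covers_length Cf Hne (S n)) as Hlen.
    rewrite (sum_eq _ (fun k => cyl_mass (length E) (nth k (first_covers Cf (S n)) []))).
    2:{ intros k Hk. unfold cyl_mass. rewrite (first_covers_nth_stable Cf Hne (S n) k); auto; lia. }
    eapply Rle_trans.
    { apply sum_f_R0_nth_le; [intros; apply cyl_mass_nonneg; auto | lia]. }
    unfold first_covers. rewrite sum_list_concat, map_map.
    pose proof (sum_list_halving (fun N => sum_list (map (cyl_mass (length E)) (Cf N)))
      eps (S n) (fun N => proj1 (proj2 (HCf N)))).
    assert (0 < eps / 2 ^ S n) by (apply Rdiv_lt_0_compat; [lra | apply pow_lt; lra]). lra.
  - intros a Ha HBa. destruct (HB a Ha HBa) as [N HN].
    destruct (proj2 (proj2 (HCf N)) a Ha HN) as [w [Hw Hpre]].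
    assert (Hin : In w (first_covers Cf (S N))).
    { apply in_concat. exists (Cf N). split; auto. apply in_map, in_seq. lia. }
    destruct (In_nth _ _ [] Hin) as [k [Hk Hkw]].
    exists k. rewrite <- (first_covers_nth_stable Cf Hne (S N)), Hkw; auto.
Qed.

Fixpoint words (E : list nat) (n : nat) : list (list nat) :=
  match n with
  | O => [[]]
  | S n => flat_map (fun e => map (cons e) (words E n)) E
  end.

Lemma words_length E n : length (words E n) = (length E ^ n)%nat.
Proof.
  induction n as [|n IH]; simpl; auto.
  rewrite flat_map_constant_length with (c := (length E ^ n)%nat); [lia|].
  intros e _. rewrite length_map. exact IH.
Qed.

Lemma In_words E n v : In v (words E n) <-> length v = n /\ (forall z, In z v -> In z E).
Proof.
  revert v; induction n as [|n IH]; intros v; simpl.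
  - split; [intros [<- | []]; simpl; tauto | intros [Hv _]; destruct v; simpl in *; auto; lia].
  - rewrite in_flat_map. split.
    + intros [e [He Hv]]. apply in_map_iff in Hv. destruct Hv as [u [<- Hu]].
      apply IH in Hu. destruct Hu as [Hl Hz]. simpl. split; [lia|].
      intros z [<- | Hz']; auto.
    + intros [Hl Hz]. destruct v as [|e u]; simpl in Hl; [lia|].
      exists e. split; [apply Hz; simpl; auto|]. apply in_map, IH.
      split; [lia|]. intros z Hz'. apply Hz. simpl; auto.
Qed.

Definition block (a : nat -> nat) (i n : nat) : list nat := map a (seq i n).

Lemma block_length a i n : length (block a i n) = n.
Proof. unfold block. rewrite length_map, length_seq. reflexivity. Qed.

Lemma nth_block a i n k : (k < n)%nat -> nth k (block a i n) 0%nat = a (i + k)%nat.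
Proof.
  intros Hk. unfold block.
  rewrite nth_indep with (d' := a 0%nat) by (rewrite length_map, length_seq; auto).
  rewrite map_nth, seq_nth; auto.
Qed.

Lemma block_prefix a n : has_prefix (block a 0 n) a.
Proof. intros i Hi. rewrite block_length in Hi. apply nth_block; auto. Qed.

Lemma block_in_words E a i n : digits_in E a -> In (block a i n) (words E n).
Proof.
  intros Ha. apply In_words. split; [apply block_length|].
  intros z Hz. unfold block in Hz. apply in_map_iff in Hz. destruct Hz as [k [<- _]]. apply Ha.
Qed.

Lemma sum_list_mass_const_length e (C : list (list nat)) M :
  (forall u, In u C -> length u = M) ->
  sum_list (map (cyl_mass e) C) = INR (length C) / INR e ^ M.
Proof.
  induction C as [|u C IH]; intros HC; [simpl; unfold Rdiv; ring|].
  change (cyl_mass e u + sum_list (map (cyl_mass e) C) = INR (S (length C)) / INR e ^ M).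
  rewrite IH by (intros; apply HC; simpl; auto). unfold cyl_mass. rewrite (HC u) by (simpl; auto).
  rewrite S_INR. unfold Rdiv. ring.
Qed.

Section AvoidingCover.
Variables (E : list nat) (l : nat) (forbidden : nat -> list nat).
Hypothesis forbidden_word : forall j, In (forbidden j) (words E l).

Definition allowed (j : nat) : list (list nat) :=
  remove (list_eq_dec Nat.eq_dec) (forbidden j) (words E l).

Fixpoint avoiding (K : nat) : list (list nat) :=
  match K with
  | O => [[]]
  | S K => flat_map (fun u => map (app u) (allowed K)) (avoiding K)
  end.

Lemma avoiding_word_length K u : In u (avoiding K) -> length u = (K * l)%nat.
Proof.
  revert u; induction K as [|K IH]; intros u Hu; simpl in Hu.
  - destruct Hu as [<- | []]; reflexivity.
  - apply in_flat_map in Hu. destruct Hu as [u0 [Hu0 Hu]].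
    apply in_map_iff in Hu. destruct Hu as [v [<- Hv]].
    apply in_remove, proj1, In_words in Hv. rewrite length_app, (IH _ Hu0), (proj1 Hv). lia.
Qed.

Lemma avoiding_length K : (length (avoiding K) <= (length E ^ l - 1) ^ K)%nat.
Proof.
  induction K as [|K IH]; simpl; auto.
  rewrite flat_map_constant_length with (c := length (allowed K))
    by (intros; apply length_map).
  assert (length (allowed K) < length E ^ l)%nat.
  { rewrite <- words_length. apply remove_length_lt, forbidden_word. }
  rewrite Nat.mul_comm. apply Nat.mul_le_mono; lia.
Qed.

Lemma avoiding_covers a K : digits_in E a ->
  (forall j, block a (j * l) l <> forbidden j) -> In (block a 0 (K * l)) (avoiding K).
Proof.
  intros Ha Hav. induction K as [|K IH]; simpl; auto.
  apply in_flat_map. exists (block a 0 (K * l)). split; auto.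
  replace (block a 0 (l + K * l)) with (block a 0 (K * l) ++ block a (K * l) l)
    by (unfold block; rewrite Nat.add_comm, seq_app, map_app; reflexivity).
  apply in_map, in_in_remove; [apply Hav | apply block_in_words; auto].
Qed.

Variables z1 z2 : nat.
Hypotheses (Hz1 : In z1 E) (Hz2 : In z2 E) (Hz12 : z1 <> z2) (Hl : (1 <= l)%nat).

Lemma allowed_nonempty j : allowed j <> [].
Proof.
  assert (Hrep : forall z, In z E -> In (repeat z l) (words E l)).
  { intros z Hz. apply In_words. split; [apply repeat_length|].
    intros y Hy. apply repeat_spec in Hy. subst; auto. }
  assert (Hdiff : repeat z1 l <> repeat z2 l).
  { destruct l as [|l']; [lia|]. simpl. congruence. }
  assert (Hz : exists z, In z E /\ repeat z l <> forbidden j).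
  { destruct (list_eq_dec Nat.eq_dec (repeat z1 l) (forbidden j)).
    - exists z2. split; auto. congruence.
    - exists z1. auto. }
  destruct Hz as [z [Hz Hzf]]. intros Hnil.
  pose proof (in_in_remove (list_eq_dec Nat.eq_dec) (words E l) Hzf (Hrep z Hz)) as Hin.
  fold (allowed j) in Hin. rewrite Hnil in Hin. destruct Hin.
Qed.

Lemma avoiding_nonempty K : avoiding K <> [].
Proof.
  induction K as [|K IH]; simpl; [discriminate|].
  destruct (avoiding K) as [|u us]; [contradiction|].
  destruct (allowed K) as [|v vs] eqn:HK; [contradiction (allowed_nonempty K)|].
  simpl. discriminate.
Qed.

Lemma avoiding_finitely_null (B : (nat -> nat) -> Prop) :
  (forall a, digits_in E a -> B a -> forall j, block a (j * l) l <> forbidden j) ->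
  finitely_null E B.
Proof.
  intros HB eps Heps.
  set (e := length E).
  assert (He : (1 <= e)%nat) by (destruct E; [destruct Hz1 | unfold e; simpl; lia]).
  set (A := INR e ^ l).
  assert (HA : 1 <= A) by (unfold A; apply pow_R1_Rle; apply (le_INR 1); auto).
  assert (Hratio : Rabs ((A - 1) / A) < 1).
  { rewrite Rabs_right.
    - apply Rmult_lt_reg_r with A; [lra|]. field_simplify; lra.
    - apply Rle_ge, Rmult_le_pos; [lra | apply Rlt_le, Rinv_0_lt_compat; lra]. }
  destruct (pow_lt_1_zero _ Hratio eps Heps) as [K HK]. specialize (HK K (le_n K)).
  exists (avoiding K). split; [apply avoiding_nonempty | split].
  - rewrite sum_list_mass_const_length with (M := (K * l)%nat) by apply avoiding_word_length.
    assert (Hcount : INR (length (avoiding K)) <= (A - 1) ^ K).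
    { pose proof (le_INR _ _ (avoiding_length K)) as H.
      rewrite pow_INR, minus_INR, pow_INR in H; [exact H|].
      apply Nat.pow_le_mono_l with (c := l) in He. rewrite Nat.pow_1_l in He. exact He. }
    replace (INR e ^ (K * l)) with (A ^ K) by (unfold A; rewrite <- pow_mult; f_equal; lia).
    apply Rle_trans with ((A - 1) ^ K / A ^ K).
    + apply Rmult_le_compat_r; [apply Rlt_le, Rinv_0_lt_compat, pow_lt; lra | exact Hcount].
    + unfold Rdiv. rewrite <- pow_inv, <- Rpow_mult_distr.
      apply Rlt_le, Rle_lt_trans with (2 := HK), Rle_abs.
  - intros a Ha HBa. exists (block a 0 (K * l)). split; [|apply block_prefix].
    apply avoiding_covers; auto.
Qed.

End AvoidingCover.

Lemma Un_cv_const (c : R) : Un_cv (fun _ => c) c.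
Proof. intros eps Heps. exists O. intros. unfold R_dist. rewrite Rminus_diag, Rabs_R0. lra. Qed.

Lemma digit_val_ext d a a' x : (forall i, a i = a' i) -> digit_val d a x -> digit_val d a' x.
Proof. intros Ha. apply Un_cv_ext. intros n. apply sum_eq. intros i _. rewrite Ha. reflexivity. Qed.

Lemma digit_sum_shift d a n : (1 <= d)%nat ->
  sum_f_R0 (fun i => INR (a (S i)) / INR d ^ S i) n =
  INR d * sum_f_R0 (fun i => INR (a i) / INR d ^ S i) (n + 1) - INR (a O).
Proof.
  intros Hd. assert (INR d <> 0) by (apply not_0_INR; lia).
  rewrite Nat.add_1_r. induction n as [|n IH].
  - simpl. field. auto.
  - rewrite (tech5 _ (S n)), tech5, IH. simpl. field. split; auto. apply pow_nonzero; auto.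
Qed.

Lemma digit_val_shift d a x : (1 <= d)%nat -> digit_val d a x ->
  digit_val d (fun i => a (S i)) (INR d * x - INR (a O)).
Proof.
  intros Hd Hx. unfold digit_val.
  apply Un_cv_ext with (fun n => INR d * sum_f_R0 (fun i => INR (a i) / INR d ^ S i) (n + 1)
                                  - INR (a O)).
  { intros n. symmetry. apply digit_sum_shift; auto. }
  apply CV_minus; [|apply Un_cv_const].
  apply (CV_mult (fun _ => INR d)); [apply Un_cv_const|].
  apply (CV_shift' (fun n => sum_f_R0 (fun i => INR (a i) / INR d ^ S i) n) 1). exact Hx.
Qed.

Fixpoint digit_tail (d : nat) (a : nat -> nat) (x : R) (n : nat) : R :=
  match n with
  | O => x
  | S n => INR d * digit_tail d a x n - INR (a n)
  end.

Lemma digit_val_tail d a x n : (1 <= d)%nat -> digit_val d a x ->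
  digit_val d (fun i => a (n + i)%nat) (digit_tail d a x n).
Proof.
  intros Hd Hx. induction n as [|n IH]; simpl; [exact Hx|].
  apply digit_val_shift in IH; auto. rewrite Nat.add_0_r in IH.
  apply (digit_val_ext _ _ _ _ (fun i => f_equal a (eq_sym (plus_n_Sm n i))) IH).
Qed.

Lemma digit_sum_max d n : (1 <= d)%nat ->
  sum_f_R0 (fun i => (INR d - 1) / INR d ^ S i) n = 1 - / INR d ^ S n.
Proof.
  intros Hd. assert (0 < INR d) by (apply lt_0_INR; lia).
  induction n as [|n IH].
  - simpl. field. lra.
  - rewrite tech5, IH. simpl. field. split; [apply pow_nonzero|]; lra.
Qed.

Lemma digit_val_bounds d a x : (1 <= d)%nat -> (forall i, (a i < d)%nat) ->
  digit_val d a x -> 0 <= x <= 1.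
Proof.
  intros Hd Ha Hx. assert (0 < INR d) by (apply lt_0_INR; lia).
  assert (Hpow : forall i, 0 < INR d ^ S i) by (intros; apply pow_lt; lra).
  split.
  - eapply Rle_cv_lim; [|apply Un_cv_const|exact Hx].
    intros n. apply cond_pos_sum. intros i.
    apply Rmult_le_pos; [apply pos_INR | apply Rlt_le, Rinv_0_lt_compat; auto].
  - eapply Rle_cv_lim; [|exact Hx|apply Un_cv_const].
    intros n. apply Rle_trans with (sum_f_R0 (fun i => (INR d - 1) / INR d ^ S i) n).
    + apply sum_Rle. intros i _. apply Rmult_le_compat_r; [apply Rlt_le, Rinv_0_lt_compat; auto|].
      specialize (Ha i). apply (le_INR (S (a i))) in Ha. rewrite S_INR in Ha. lra.
    + rewrite digit_sum_max by auto. pose proof (Rinv_0_lt_compat _ (Hpow n)). lra.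
Qed.

Section Gap.
Variables (d : nat) (a b : nat -> nat) (x t : R) (p q : Z).
Hypotheses (Hd : (1 <= d)%nat) (Ha : forall i, (a i < d)%nat) (Hb : forall i, (b i < d)%nat).
Hypotheses (Hx : digit_val d a x) (Ht : digit_val d b t).
Hypotheses (Hq : (0 < q)%Z) (Hpq : t - x = IZR p / IZR q).
Hypothesis Hnondyadic : forall p' n, t - x <> IZR p' / INR d ^ n.

Definition gap (n : nat) : R := digit_tail d b t n - digit_tail d a x n.

Fixpoint carry (n : nat) : Z :=
  match n with
  | O => 0%Z
  | S n => (Z.of_nat d * carry n + (Z.of_nat (b n) - Z.of_nat (a n)))%Z
  end.

Lemma gap_succ n : gap (S n) = INR d * gap n - (INR (b n) - INR (a n)).
Proof. unfold gap. simpl. ring. Qed.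

Lemma gap_carry n : gap n = INR d ^ n * (t - x) - IZR (carry n).
Proof.
  induction n as [|n IH]; [unfold gap; simpl; ring|].
  rewrite gap_succ, IH. simpl carry.
  rewrite plus_IZR, mult_IZR, minus_IZR, <- !INR_IZR_INZ. simpl. ring.
Qed.

Lemma gap_not_integer n m : gap n <> IZR m.
Proof.
  intros H. rewrite gap_carry in H. apply (Hnondyadic (m + carry n) n).
  assert (INR d ^ n <> 0) by (apply pow_nonzero, not_0_INR; lia).
  rewrite plus_IZR, <- H. field. auto.
Qed.

Lemma gap_lt_1 n : -1 < gap n < 1.
Proof.
  pose proof (digit_val_bounds d _ _ Hd (fun i => Ha (n + i)) (digit_val_tail d a x n Hd Hx)).
  pose proof (digit_val_bounds d _ _ Hd (fun i => Hb (n + i)) (digit_val_tail d b t n Hd Ht)).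
  pose proof (gap_not_integer n 1). pose proof (gap_not_integer n (-1)).
  unfold gap in *. simpl in *. lra.
Qed.

Lemma gap_abs_ge n : / IZR q <= Rabs (gap n).
Proof.
  set (z := (p * Z.of_nat d ^ Z.of_nat n - q * carry n)%Z).
  assert (Hq' : 0 < IZR q) by (apply IZR_lt; auto).
  assert (Hz : IZR q * gap n = IZR z).
  { unfold z. rewrite gap_carry, Hpq, minus_IZR, !mult_IZR, <- pow_IZR, <- INR_IZR_INZ.
    field. lra. }
  assert (Hz0 : z <> 0%Z).
  { intros H0. apply (gap_not_integer n 0). rewrite H0 in Hz.
    apply Rmult_eq_reg_l with (IZR q); [rewrite Hz; ring | lra]. }
  assert (Hzabs : 1 <= Rabs (IZR z)) by (rewrite <- abs_IZR; apply IZR_le; lia).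
  rewrite <- Hz, Rabs_mult, Rabs_right in Hzabs by lra.
  apply Rmult_le_reg_l with (IZR q); [lra|]. rewrite Rinv_r; lra.
Qed.

Lemma carry_pos_gap n : 0 < gap n -> carry n = (up (INR d ^ n * (t - x)) - 1)%Z.
Proof.
  intros Hpos. pose proof (gap_lt_1 n). rewrite gap_carry in *.
  destruct (archimed (INR d ^ n * (t - x))) as [Hup1 Hup2].
  assert (Hlt : (-1 < up (INR d ^ n * (t - x)) - 1 - carry n < 1)%Z).
  { split; apply lt_IZR; rewrite !minus_IZR; simpl; lra. }
  lia.
Qed.

Lemma carry_neg_gap n : gap n < 0 -> carry n = up (INR d ^ n * (t - x)).
Proof.
  intros Hneg. pose proof (gap_lt_1 n). rewrite gap_carry in *.
  destruct (archimed (INR d ^ n * (t - x))) as [Hup1 Hup2].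
  assert (Hlt : (-1 < up (INR d ^ n * (t - x)) - carry n < 1)%Z).
  { split; apply lt_IZR; rewrite !minus_IZR; simpl; lra. }
  lia.
Qed.

Lemma gap_grow j m : (forall k, (k < m)%nat -> (b (j + k) <= a (j + k))%nat) ->
  INR d ^ m * gap j <= gap (j + m).
Proof.
  intros Hba. induction m as [|m IH]; [rewrite Nat.add_0_r; simpl; lra|].
  rewrite Nat.add_succ_r, gap_succ.
  assert (INR (b (j + m)) <= INR (a (j + m))) by (apply le_INR, Hba; lia).
  assert (0 <= INR d) by apply pos_INR.
  specialize (IH (fun k Hk => Hba k (Nat.lt_lt_succ_r _ _ Hk))). simpl. nra.
Qed.

Lemma gap_shrink j m : (forall k, (k < m)%nat -> (a (j + k) <= b (j + k))%nat) ->
  gap (j + m) <= INR d ^ m * gap j.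
Proof.
  intros Hab. induction m as [|m IH]; [rewrite Nat.add_0_r; simpl; lra|].
  rewrite Nat.add_succ_r, gap_succ.
  assert (INR (a (j + m)) <= INR (b (j + m))) by (apply le_INR, Hab; lia).
  assert (0 <= INR d) by apply pos_INR.
  specialize (IH (fun k Hk => Hab k (Nat.lt_lt_succ_r _ _ Hk))). simpl. nra.
Qed.

Variable L : nat.
Hypothesis HL : IZR q <= INR d ^ L.

Lemma gap_scaled_ge_1 j : 1 <= INR d ^ L * Rabs (gap j).
Proof.
  assert (0 < IZR q) by (apply IZR_lt; auto).
  apply Rle_trans with (IZR q * / IZR q); [rewrite Rinv_r; lra|].
  apply Rmult_le_compat; [lra | apply Rlt_le, Rinv_0_lt_compat; lra | exact HL | apply gap_abs_ge].
Qed.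

Lemma gap_neg_of_top_run j : (forall k, (k < L)%nat -> a (j + k) = (d - 1)%nat) -> gap j < 0.
Proof.
  intros Hrun. destruct (Rtotal_order (gap j) 0) as [Hneg | [H0 | Hpos]]; auto; exfalso.
  - apply (gap_not_integer j 0). exact H0.
  - assert (Hgrow : INR d ^ L * gap j <= gap (j + L)).
    { apply gap_grow. intros k Hk. rewrite Hrun by auto. specialize (Hb (j + k)). lia. }
    pose proof (gap_scaled_ge_1 j). rewrite Rabs_right in * by lra.
    pose proof (gap_lt_1 (j + L)). lra.
Qed.

Lemma gap_pos_of_zero_run j : (forall k, (k < L)%nat -> a (j + k) = 0%nat) -> 0 < gap j.
Proof.
  intros Hrun. destruct (Rtotal_order (gap j) 0) as [Hneg | [H0 | Hpos]]; auto; exfalso.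
  - assert (Hshrink : gap (j + L) <= INR d ^ L * gap j).
    { apply gap_shrink. intros k Hk. rewrite Hrun by auto. lia. }
    pose proof (gap_scaled_ge_1 j). rewrite Rabs_left in * by lra.
    pose proof (gap_lt_1 (j + L)). lra.
  - apply (gap_not_integer j 0). exact H0.
Qed.

End Gap.

(* Closure of [E] under [+ c] modulo a prime [d] would make it contain the whole
   orbit of [e0], i.e. every residue, since [c] is invertible modulo [d]. *)
Lemma translate_mod_prime_not_closed (d : nat) (E : list nat) (e0 : nat) (c : Z) :
  prime (Z.of_nat d) -> (forall e, In e E -> (e < d)%nat) -> NoDup E ->
  (length E < d)%nat -> In e0 E -> ~ (Z.of_nat d | c)%Z ->
  exists al, In al E /\
    forall be, In be E -> ~ (Z.of_nat d | Z.of_nat be - Z.of_nat al - c)%Z.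
Proof.
  intros Hprime HE Hnd Hlen He0 Hc. apply NNPP. intros Hclosed.
  set (D := Z.of_nat d).
  assert (HD : (1 < D)%Z) by apply Hprime.
  assert (Hstep : forall al, In al E -> exists be, In be E /\ (D | Z.of_nat be - Z.of_nat al - c)%Z).
  { intros al Hal. apply NNPP. intros Hno. apply Hclosed. exists al. split; auto.
    intros be Hbe Hdiv. apply Hno. eauto. }
  assert (Horbit : forall k : nat, exists be, In be E /\
            (D | Z.of_nat be - Z.of_nat e0 - Z.of_nat k * c)%Z).
  { induction k as [|k [be [Hbe [z Hz]]]].
    - exists e0. split; auto. exists 0%Z. lia.
    - destruct (Hstep be Hbe) as [be' [Hbe' [z' Hz']]].
      exists be'. split; auto. exists (z + z')%Z. lia. }
  destruct (rel_prime_bezout D c (prime_rel_prime D Hprime c Hc)) as [u v Huv].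
  assert (Hfull : forall y, (y < d)%nat -> In y E).
  { intros y Hy.
    set (k := ((Z.of_nat y - Z.of_nat e0) * v) mod D).
    assert (Hk : (0 <= k)%Z) by (apply Z.mod_pos_bound; lia).
    assert (Hkv : (D | k - (Z.of_nat y - Z.of_nat e0) * v)%Z).
    { exists (- (((Z.of_nat y - Z.of_nat e0) * v) / D))%Z. unfold k.
      rewrite Z.mod_eq by lia. lia. }
    destruct (Horbit (Z.to_nat k)) as [be [Hbe Hbek]]. rewrite Z2Nat.id in Hbek by lia.
    assert (Hdiv : (D | Z.of_nat be - Z.of_nat y)%Z).
    { replace (Z.of_nat be - Z.of_nat y)%Z with
        ((Z.of_nat be - Z.of_nat e0 - k * c) + (k - (Z.of_nat y - Z.of_nat e0) * v) * c
         - (Z.of_nat y - Z.of_nat e0) * u * D)%Z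
        by (pose proof (f_equal (Z.mul (Z.of_nat y - Z.of_nat e0)) Huv); lia).
      apply Z.divide_sub_r; [apply Z.divide_add_r; [exact Hbek | apply Z.divide_mul_l; exact Hkv]|].
      apply Z.divide_factor_r. }
    destruct Hdiv as [z Hz]. pose proof (HE be Hbe).
    assert (z = 0%Z) by nia. replace y with be by lia. exact Hbe. }
  assert (Hincl : incl (seq 0 d) E) by (intros y Hy; apply in_seq in Hy; apply Hfull; lia).
  pose proof (NoDup_incl_length (seq_NoDup d 0) Hincl). rewrite length_seq in *. lia.
Qed.

Definition nondyadic_partner (d : nat) (E : list nat) (p q : Z) (a : nat -> nat) : Prop :=
  exists b x t, digits_in E b /\ digit_val d a x /\ digit_val d b t /\
    t - x = IZR p / IZR q /\ forall p' n, t - x <> IZR p' / INR d ^ n.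

Section ForbiddenWords.
Variables (d : nat) (E : list nat) (p q : Z) (L : nat).
Hypotheses (HE : forall e, In e E -> (e < d)%nat) (Hnd : NoDup E) (Hlen : (length E < d)%nat).
Hypotheses (Hprime : prime (Z.of_nat d)) (H0 : In 0%nat E) (Htop : In (d - 1)%nat E).
Hypotheses (Hq : (0 < q)%Z) (HL : IZR q <= INR d ^ L).

Lemma forced_carry_forbids (i : nat) (c : Z) (e : nat) :
  ~ (Z.of_nat d | c)%Z -> In e E ->
  (forall a b x t, digits_in E a -> digits_in E b -> digit_val d a x -> digit_val d b t ->
     t - x = IZR p / IZR q -> (forall p' n, t - x <> IZR p' / INR d ^ n) ->
     (forall k, (k < L)%nat -> a (S i + k)%nat = e) -> carry d a b (S i) = c) ->
  exists w, In w (words E (S L)) /\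
    forall a, digits_in E a -> nondyadic_partner d E p q a -> block a i (S L) <> w.
Proof.
  intros Hc He Hforced.
  destruct (translate_mod_prime_not_closed d E 0 c Hprime HE Hnd Hlen H0 Hc) as [al [Hal Hres]].
  exists (al :: repeat e L). split.
  - apply In_words. split; [simpl; rewrite repeat_length; reflexivity|].
    intros z [<- | Hz]; auto. apply repeat_spec in Hz. subst. exact He.
  - intros a Ha [b [x [t [Hb [Hx [Ht [Hpq Hnondyadic]]]]]]] Hblock.
    assert (Hai : a i = al).
    { rewrite <- (Nat.add_0_r i), <- nth_block with (n := S L), Hblock by lia. reflexivity. }
    assert (Hrun : forall k, (k < L)%nat -> a (S i + k)%nat = e).
    { intros k Hk. replace (S i + k)%nat with (i + S k)%nat by lia.
      rewrite <- nth_block with (n := S L), Hblock by lia.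
      simpl. apply nth_repeat_lt. exact Hk. }
    specialize (Hforced a b x t Ha Hb Hx Ht Hpq Hnondyadic Hrun). simpl in Hforced.
    apply (Hres (b i) (Hb i)). exists (- carry d a b i)%Z. lia.
Qed.

Lemma forbidden_word (i : nat) : exists w, In w (words E (S L)) /\
  forall a, digits_in E a -> nondyadic_partner d E p q a -> block a i (S L) <> w.
Proof.
  assert (Hd : (1 <= d)%nat) by (pose proof (prime_ge_2 _ Hprime); lia).
  set (u := up (INR d ^ S i * (IZR p / IZR q))).
  destruct (classic (Z.of_nat d | u)%Z) as [Hdu | Hdu].
  - apply (forced_carry_forbids i (u - 1) 0); auto.
    + intros Hdu1. assert (Hd1 : (Z.of_nat d | 1)%Z).
      { replace 1%Z with (u - (u - 1))%Z by ring. apply Z.divide_sub_r; auto. }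
      apply Z.divide_pos_le in Hd1; [|lia]. pose proof (prime_ge_2 _ Hprime). lia.
    + intros a b x t Ha Hb Hx Ht Hpq Hnondyadic Hrun.
      assert (Ha' : forall j, (a j < d)%nat) by (intros j; apply HE, Ha).
      assert (Hb' : forall j, (b j < d)%nat) by (intros j; apply HE, Hb).
      unfold u. rewrite <- Hpq. apply (carry_pos_gap d a b x t); auto.
      exact (gap_pos_of_zero_run d a b x t p q Hd Ha' Hb' Hx Ht Hq Hpq Hnondyadic L HL _ Hrun).
  - apply (forced_carry_forbids i u (d - 1)); auto.
    intros a b x t Ha Hb Hx Ht Hpq Hnondyadic Hrun.
    assert (Ha' : forall j, (a j < d)%nat) by (intros j; apply HE, Ha).
    assert (Hb' : forall j, (b j < d)%nat) by (intros j; apply HE, Hb).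
    unfold u. rewrite <- Hpq. apply (carry_neg_gap d a b x t); auto.
    exact (gap_neg_of_top_run d a b x t p q Hd Ha' Hb' Hx Ht Hq Hpq Hnondyadic L HL _ Hrun).
Qed.

End ForbiddenWords.

Lemma nondyadic_partner_finitely_null (d : nat) (E : list nat) (p q : Z) :
  (forall e, In e E -> (e < d)%nat) -> NoDup E -> (length E < d)%nat ->
  prime (Z.of_nat d) -> In 0%nat E -> In (d - 1)%nat E -> (0 < q)%Z ->
  finitely_null E (nondyadic_partner d E p q).
Proof.
  intros HE Hnd Hlen Hprime H0 Htop Hq.
  pose proof (prime_ge_2 _ Hprime) as Hd.
  set (L := Z.to_nat q).
  assert (HL : IZR q <= INR d ^ L).
  { rewrite <- pow_INR, INR_IZR_INZ. apply IZR_le.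
    assert (L < d ^ L)%nat by (apply Nat.pow_gt_lin_r; lia). lia. }
  destruct (choice (fun i w => In w (words E (S L)) /\
      forall a, digits_in E a -> nondyadic_partner d E p q a -> block a i (S L) <> w))
    as [wf Hwf].
  { intros i. apply forbidden_word; auto. }
  apply (avoiding_finitely_null E (S L) (fun j => wf (j * S L)%nat)
           (fun j => proj1 (Hwf _)) 0 (d - 1)); auto; try lia.
  intros a Ha Hbad j. apply Hwf; auto.
Qed.

Definition int_of_code (n : nat) : Z := (Z.of_nat (fst (of_nat n)) - Z.of_nat (snd (of_nat n)))%Z.

Definition rat_of_code (N : nat) : Z * Z :=
  (int_of_code (fst (of_nat N)), Z.of_nat (S (snd (of_nat N)))).

Lemma rat_of_code_surj p q : (0 < q)%Z -> exists N, rat_of_code N = (p, q).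
Proof.
  intros Hq.
  assert (Hp : exists jk, int_of_code (to_nat jk) = p).
  { destruct (Z_le_dec 0 p).
    - exists (Z.to_nat p, 0%nat). unfold int_of_code. rewrite cancel_of_to. simpl. lia.
    - exists (0%nat, Z.to_nat (- p)). unfold int_of_code. rewrite cancel_of_to. simpl. lia. }
  destruct Hp as [jk Hjk].
  exists (to_nat (to_nat jk, Nat.pred (Z.to_nat q))).
  unfold rat_of_code. rewrite cancel_of_to. cbn [fst snd]. f_equal; lia.
Qed.

Lemma rational_pos_denominator r : is_rational r -> exists p q, (0 < q)%Z /\ r = IZR p / IZR q.
Proof.
  intros [p [q [Hq Hr]]]. destruct (Z_lt_le_dec 0 q).
  - exists p, q. auto.
  - exists (- p)%Z, (- q)%Z. split; [lia|]. rewrite Hr, !opp_IZR. field. apply not_0_IZR. auto.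
Qed.

Theorem theorem3p5 (d : nat) (E : list nat)
  (hd : (2 <= d)%nat)
  (hE : forall e, In e E -> (e < d)%nat)
  (hnd : NoDup E)
  (hcard : (1 < length E < d)%nat)
  (hprime : prime (Z.of_nat d))
  (h0 : In 0%nat E) (hd1 : In (d - 1)%nat E)
  (hgap : forall a b, In a E -> In b E -> a <> S b) :
  mu_ae d E (fun x =>
    forall t, inJ d E t -> is_rational (t - x) ->
      exists (p : Z) (n : nat), t - x = IZR p / INR d ^ n).
Proof.
  apply digit_null_of_countable_union with
    (BN := fun N => nondyadic_partner d E (fst (rat_of_code N)) (snd (rat_of_code N))).
  - lia.
  - intros N. apply nondyadic_partner_finitely_null; auto; try lia. simpl. lia.
  - intros a Ha [x [Hx Hnot]].
    apply not_all_ex_not in Hnot as [t Ht].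
    apply imply_to_and in Ht as [[b [Hb Hbt]] Ht].
    apply imply_to_and in Ht as [Hrat Hnondyadic].
    destruct (rational_pos_denominator _ Hrat) as [p [q [Hq Hpq]]].
    destruct (rat_of_code_surj p q Hq) as [N HN].
    exists N. rewrite HN. exists b, x, t. repeat split; auto.
    intros p' n Heq. apply Hnondyadic. eauto.
Qed.
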